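(* Let $\mathcal{A}$ be a complex vector space with two bilinear operations $[\cdot,\cdot]$ and $\circ$ and a linear endomorphism $\alpha$. Let $\mathcal{L}(\mathcal{A})=\mathcal{A}\otimes\mathbb{C}[t,t^{-1}]$ with bilinear bracket $[u\otimes t^m,v\otimes t^n]=[u,v]\otimes t^{m+n}+m\,(u\circ v)\otimes t^{m+n-1}-n\,(v\circ u)\otimes t^{m+n-1}$ for $u,v\in\mathcal{A}$, $m,n\in\mathbb{Z}$, and linear map $\varphi(u\otimes t^m)=\alpha(u)\otimes t^m$. Then $(\mathcal{L}(\mathcal{A}),[-,-],\varphi)$ is a Hom-Lie algebra if and only if $(\mathcal{A},[\cdot,\cdot],\circ,\alpha)$ is a Hom Gel'fand-Dorfman bialgebra.
   Context: A Hom-Lie algebra is a vector space $L$ with a bilinear map $[\cdot,\cdot]$ and linear map $\alpha$ with $[x,y]=-[y,x]$ and $[[x,y],\alpha(z)]+[[y,z],\alpha(x)]+[[z,x],\alpha(y)]=0$ for all $x,y,z$. A Hom-Novikov algebra is a vector space with a bilinear operation $\circ$ and a linear endomorphism $\alpha$ such that $(x\circ y)\circ\alpha(z)-\alpha(x)\circ(y\circ z)=(y\circ x)\circ\alpha(z)-\alpha(y)\circ(x\circ z)$ and $(x\circ y)\circ\alpha(z)=(x\circ z)\circ\alpha(y)$ for all $x,y,z$. A Hom Gel'fand-Dorfman bialgebra is a vector space $\mathcal{A}$ with a linear endomorphism $\alpha$ and two bilinear operations $[\cdot,\cdot],\circ$ such that $(\mathcal{A},[\cdot,\cdot],\alpha)$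 is a Hom-Lie algebra, $(\mathcal{A},\circ,\alpha)$ is a Hom-Novikov algebra, and $[x\circ y,\alpha(z)]-[x\circ z,\alpha(y)]+[x,y]\circ\alpha(z)-[x,z]\circ\alpha(y)-\alpha(x)\circ[y,z]=0$ for all $x,y,z$. *)

From HB Require Import structures.
From mathcomp Require Import all_boot all_order all_algebra.
From mathcomp Require Import boolp classical_sets functions.
From mathcomp Require Import reals.
From mathcomp Require Export complex.
From mathcomp Require Import zify.

Set Implicit Arguments.
Unset Strict Implicit.
Unset Printing Implicit Defensive.

Import Order.TTheory GRing.Theory Num.Theory.
Local Open Scope ring_scope.

Section Notions.
Variables (K : fieldType) (V : lmodType K).

Definition bilinear_op (b : V -> V -> V) : Prop :=
  (forall u, linear (b u)) /\ (forall v, linear (fun u => b u v)).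

Definition HomLie (b : V -> V -> V) (a : V -> V) : Prop :=
  [/\ bilinear_op b, linear a,
      (forall x y, b x y = - b y x) &
      (forall x y z, b (b x y) (a z) + b (b y z) (a x) + b (b z x) (a y) = 0)].

Definition HomNovikov (c : V -> V -> V) (a : V -> V) : Prop :=
  [/\ bilinear_op c, linear a,
      (forall x y z, c (c x y) (a z) - c (a x) (c y z)
                     = c (c y x) (a z) - c (a y) (c x z)) &
      (forall x y z, c (c x y) (a z) = c (c x z) (a y))].

Definition HomGD (b c : V -> V -> V) (a : V -> V) : Prop :=
  [/\ HomLie b a, HomNovikov c a &
      (forall x y z, b (c x y) (a z) - b (c x z) (a y) + c (b x y) (a z)
                     - c (b x z) (a y) - c (a x) (b y z) = 0)].

End Notions.

(* The loop space L(V) = V (x) K[t,t^-1], realised as the finitely     *)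
(* supported functions f : int -> V  (f n = coefficient of t^n).       *)
Section Loop.
Variables (K : fieldType) (V : lmodType K).

Definition fin_supp (f : int -> V) : Prop :=
  exists N : nat, forall n : int, (N < `|n|)%N -> f n = 0.

Definition fsuppb : {pred int -> V} := fun f => `[< fin_supp f >].

Lemma fsuppb_submod : submod_closed fsuppb.
Proof.
split; first by apply/asboolP; exists 0%N.
move=> a u v /asboolP [N1 H1] /asboolP [N2 H2]; apply/asboolP.
exists (maxn N1 N2) => n Hn.
have -> : (a *: u + v) n = a *: u n + v n by [].
rewrite H1 ?H2 ?scaler0 ?addr0 //; apply: leq_ltn_trans Hn;
  by rewrite ?leq_maxl ?leq_maxr.
Qed.

HB.instance Definition _ := GRing.isSubmodClosed.Build K (int -> V) fsuppb
  fsuppb_submod.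

Record loop := Loop { loopval :> int -> V ; loopvalP : loopval \in fsuppb }.

HB.instance Definition _ := [isSub for loopval].
HB.instance Definition _ := [Choice of loop by <:].
HB.instance Definition _ := [SubChoice_isSubLmodule of loop by <:].

Definition loop_bound (x : loop) : nat :=
  xget 0%N (fun N : nat => forall n : int, (N < `|n|)%N -> x n = 0).

Variables (b c : V -> V -> V).

(* Coefficient of t^k in [f, g], computed on the window [-N, N]:
   [u t^m, v t^n] = [u,v] t^(m+n) + m (u o v) t^(m+n-1) - n (v o u) t^(m+n-1) *)
Definition loop_brN (N : nat) (f g : int -> V) (k : int) : V :=
  \sum_(i < N.*2.+1) \sum_(j < N.*2.+1)
    (let m := (i%:Z - N%:Z)%R in let n := (j%:Z - N%:Z)%R in
     (if m + n == k then b (f m) (g n) else 0) +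
     (if m + n - 1 == k then m%:~R *: c (f m) (g n) - n%:~R *: c (g n) (f m)
      else 0)).

Lemma loop_brN_supp N f g : loop_brN N f g \in fsuppb.
Proof.
apply/asboolP; exists N.*2.+1 => k Hk.
apply: big1 => i _; apply: big1 => j _ /=.
have Hi := ltn_ord i; have Hj := ltn_ord j.
have -> : (i%:Z - N%:Z + (j%:Z - N%:Z) == k) = false by apply/eqP; lia.
have -> : (i%:Z - N%:Z + (j%:Z - N%:Z) - 1 == k) = false by apply/eqP; lia.
by rewrite addr0.
Qed.

Definition loop_br (x y : loop) : loop :=
  Loop (loop_brN_supp (maxn (loop_bound x) (loop_bound y)) x y).

Variable alpha : {linear V -> V}.

Lemma loop_phi_supp (x : loop) : (fun n => alpha (x n)) \in fsuppb.
Proof.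
case: x => f /= /asboolP [N HN]; apply/asboolP; exists N => n Hn.
by rewrite HN // linear0.
Qed.

Definition loop_phi (x : loop) : loop := Loop (loop_phi_supp x).

End Loop.

From HB Require Import structures.
From mathcomp Require Import all_boot all_algebra.
From mathcomp Require Import boolp classical_sets reals complex.
From mathcomp Require Import ring zify.

Set Implicit Arguments.
Unset Strict Implicit.
Unset Printing Implicit Defensive.

Import GRing.Theory Num.Theory.
Local Open Scope ring_scope.

(* The loop bracket is bilinear, so the Hom-Jacobi identity on L(A) only has to
   be checked on monomials u t^l, v t^m, w t^n.  Their Jacobiator lives in the
   degrees l+m+n, l+m+n-1 and l+m+n-2, with coefficients the Hom-Jacobiator of
   [.,.]; the sum over cyclic permutations of l C(u,v,w), C the compatibility
   expression (once [.,.] is skew); and the cyclic sum of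
     l m (as(u,v,w) - as(v,u,w)) + l (l-1) ((u o v) o alpha(w) - (u o w) o alpha(v))
   with as the Hom-associator of o.  Choosing the exponents among 0, 1, 2
   isolates each identity; the factor l (l-1) is why 2 has to be invertible. *)

(* [K * V] with [(a, u) * (b, v) = (a b, a v + b u)] is a commutative ring in
   which [V] embeds additively and [K]-linearly as a square-zero ideal, so
   identities in [V] that are linear in the vectors follow from [ring]. *)
Definition sqz (K : comNzRingType) (V : lmodType K) := (K * V)%type.

Section SquareZeroExtension.
Variables (K : comNzRingType) (V : lmodType K).

HB.instance Definition _ := GRing.Zmodule.on (sqz V).

Definition sqz_mul (x y : sqz V) : sqz V := (x.1 * y.1, x.1 *: y.2 + y.1 *: x.2).

Lemma sqz_mulA : associative sqz_mul.
Proof.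
move=> [a u] [b v] [c w]; rewrite /sqz_mul /=; congr pair; first by rewrite mulrA.
by rewrite !scalerDr !scalerA [c * a]mulrC [c * b]mulrC addrA.
Qed.

Lemma sqz_mulC : commutative sqz_mul.
Proof. by move=> [a u] [b v]; rewrite /sqz_mul /= mulrC addrC. Qed.

Lemma sqz_mul1 : left_id (1, 0) sqz_mul.
Proof. by move=> [a u]; rewrite /sqz_mul /= mul1r scale1r scaler0 addr0. Qed.

Lemma sqz_mulDl : left_distributive sqz_mul +%R.
Proof.
move=> [a u] [b v] [c w]; rewrite /sqz_mul /=; congr pair; first by rewrite mulrDl.
by rewrite scalerDl scalerDr addrACA.
Qed.

Lemma sqz_one_neq0 : (1, 0) != 0 :> sqz V.
Proof. by apply/eqP => -[] /eqP; rewrite oner_eq0. Qed.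

HB.instance Definition _ := GRing.Zmodule_isComNzRing.Build (sqz V)
  sqz_mulA sqz_mulC sqz_mul1 sqz_mulDl sqz_one_neq0.

Definition sqz_vec (v : V) : sqz V := (0, v).
Definition sqz_scalar (a : K) : sqz V := (a, 0).

Lemma sqz_vec_inj : injective sqz_vec. Proof. by move=> u v /(congr1 snd). Qed.
Lemma sqz_vec0 : sqz_vec 0 = 0. Proof. by []. Qed.
Lemma sqz_vecD u v : sqz_vec (u + v) = sqz_vec u + sqz_vec v.
Proof. by rewrite /sqz_vec /= -[0 in LHS]addr0. Qed.
Lemma sqz_vecN v : sqz_vec (- v) = - sqz_vec v.
Proof. by rewrite /sqz_vec /= -[0 in LHS]oppr0. Qed.
Lemma sqz_vecZ a v : sqz_vec (a *: v) = sqz_scalar a * sqz_vec v.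
Proof. by rewrite /GRing.mul /= /sqz_mul /= mulr0 scale0r addr0. Qed.

Lemma sqz_scalar0 : sqz_scalar 0 = 0. Proof. by []. Qed.
Lemma sqz_scalar1 : sqz_scalar 1 = 1. Proof. by []. Qed.
Lemma sqz_scalarD a b : sqz_scalar (a + b) = sqz_scalar a + sqz_scalar b.
Proof. by rewrite /sqz_scalar /= -[0 in LHS]addr0. Qed.
Lemma sqz_scalarN a : sqz_scalar (- a) = - sqz_scalar a.
Proof. by rewrite /sqz_scalar /= -[0 in LHS]oppr0. Qed.
Lemma sqz_scalarM a b : sqz_scalar (a * b) = sqz_scalar a * sqz_scalar b.
Proof. by rewrite /GRing.mul /= /sqz_mul /= !scaler0 addr0. Qed.

Lemma sqz_scalar_nat n : sqz_scalar n%:R = n%:R.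
Proof. by elim: n => [//|n IHn]; rewrite !mulrS sqz_scalarD IHn. Qed.

Lemma sqz_scalar_int z : sqz_scalar z%:~R = z%:~R.
Proof. by case: z => n; rewrite ?NegzE ?mulrNz ?sqz_scalarN sqz_scalar_nat. Qed.

End SquareZeroExtension.

Ltac lmod_ring := apply: sqz_vec_inj;
  rewrite ?(sqz_vec0, sqz_vecD, sqz_vecN, sqz_vecZ, sqz_scalar0, sqz_scalar1,
            sqz_scalarD, sqz_scalarN, sqz_scalarM, sqz_scalar_int);
  ring.

Section Linear.
Variables (K : pzRingType) (V W : lmodType K) (f : V -> W) (f_lin : linear f).

Lemma linear_fun0 : f 0 = 0.
Proof. by have := f_lin (-1) 0 0; rewrite scaler0 add0r scaleN1r addNr. Qed.
Lemma linear_funD x y : f (x + y) = f x + f y.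
Proof. by have := f_lin 1 x y; rewrite !scale1r. Qed.
Lemma linear_funZ a x : f (a *: x) = a *: f x.
Proof. by have := f_lin a x 0; rewrite !addr0 linear_fun0 addr0. Qed.
Lemma linear_funN x : f (- x) = - f x.
Proof. by rewrite -scaleN1r linear_funZ scaleN1r. Qed.

End Linear.

Definition hom_jacobiator (V : zmodType) (b : V -> V -> V) (a : V -> V) (x y z : V) : V :=
  b (b x y) (a z) + b (b y z) (a x) + b (b z x) (a y).

Lemma hom_jacobiatorC (V : zmodType) (b : V -> V -> V) (a : V -> V) x y z :
  hom_jacobiator b a x y z = hom_jacobiator b a y z x.
Proof. by rewrite /hom_jacobiator -addrA addrC. Qed.

Section Bilinear.
Variables (K : fieldType) (V : lmodType K) (b : V -> V -> V) (b_bilin : bilinear_op b).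

Lemma bilin0l v : b 0 v = 0. Proof. exact: (linear_fun0 (b_bilin.2 v)). Qed.
Lemma bilinDl u1 u2 v : b (u1 + u2) v = b u1 v + b u2 v.
Proof. exact: (linear_funD (b_bilin.2 v)). Qed.
Lemma bilinNl u v : b (- u) v = - b u v. Proof. exact: (linear_funN (b_bilin.2 v)). Qed.
Lemma bilinZl a u v : b (a *: u) v = a *: b u v.
Proof. exact: (linear_funZ (b_bilin.2 v)). Qed.
Lemma bilin0r u : b u 0 = 0. Proof. exact: (linear_fun0 (b_bilin.1 u)). Qed.
Lemma bilinDr u v1 v2 : b u (v1 + v2) = b u v1 + b u v2.
Proof. exact: (linear_funD (b_bilin.1 u)). Qed.
Lemma bilinNr u v : b u (- v) = - b u v. Proof. exact: (linear_funN (b_bilin.1 u)). Qed.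
Lemma bilinZr a u v : b u (a *: v) = a *: b u v.
Proof. exact: (linear_funZ (b_bilin.1 u)). Qed.

Lemma bilinear_op_opp : bilinear_op (fun u v => - b v u).
Proof.
by split=> w a u v; rewrite ?bilinDl ?bilinZl ?bilinDr ?bilinZr opprD scalerN.
Qed.

Section HomJacobiator.
Variables (a : V -> V) (a_lin : linear a).

Lemma hom_jacobiator0l y z : hom_jacobiator b a 0 y z = 0.
Proof.
by rewrite /hom_jacobiator (linear_fun0 a_lin) !(bilin0l, bilin0r) !addr0.
Qed.

Lemma hom_jacobiatorDl x1 x2 y z :
  hom_jacobiator b a (x1 + x2) y z = hom_jacobiator b a x1 y z + hom_jacobiator b a x2 y z.
Proof.
rewrite /hom_jacobiator (linear_funD a_lin) !bilinDl !bilinDr !bilinDl; lmod_ring.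
Qed.

End HomJacobiator.
End Bilinear.

Ltac bilin_simpl b_bilin := rewrite ?(bilinDl b_bilin, bilinDr b_bilin, bilinNl b_bilin,
  bilinNr b_bilin, bilinZl b_bilin, bilinZr b_bilin, bilin0l b_bilin, bilin0r b_bilin).

Section WindowSum.
Variable V : zmodType.

Definition wsum (N : nat) (G : int -> V) : V := \sum_(i < N.*2.+1) G (i%:Z - N%:Z).

Definition vanish_beyond (N : nat) (G : int -> V) := forall n : int, (N < `|n|)%N -> G n = 0.

Lemma vanish_beyond_le M N G : (M <= N)%N -> vanish_beyond M G -> vanish_beyond N G.
Proof. by move=> le_MN GM n ltNn; apply: GM; apply: leq_ltn_trans ltNn. Qed.

Lemma wsumS N G : G (- (N.+1)%:Z) = 0 -> G (N.+1)%:Z = 0 -> wsum N.+1 G = wsum N G.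
Proof.
move=> G_lo G_hi; rewrite /wsum doubleS big_ord_recr big_ord_recl /=.
rewrite (_ : 0%:Z - _ = - (N.+1)%:Z) ?sub0r // (_ : _ - _ = (N.+1)%:Z); last by lia.
rewrite G_lo G_hi add0r addr0; apply: eq_bigr => i _; congr G.
by rewrite /bump /=; lia.
Qed.

Lemma wsum_widen M N G : vanish_beyond M G -> (M <= N)%N -> wsum N G = wsum M G.
Proof.
move=> GM; elim: N => [|N IHN]; first by rewrite leqn0 => /eqP ->.
rewrite leq_eqVlt => /orP [/eqP -> //| ltMN].
by rewrite wsumS ?IHN //; apply: GM; rewrite ?abszN; lia.
Qed.

Lemma wsum_delta N G (l : int) : (`|l| <= N)%N -> (forall p, p != l -> G p = 0) ->
  wsum N G = G l.
Proof.
move=> le_lN Gl; rewrite /wsum.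
have lt_i : (absz (l + N%:Z)%R < N.*2.+1)%N by lia.
rewrite (bigD1 (Ordinal lt_i)) //= big1 ?addr0; first by congr G; lia.
move=> i /eqP ne_i; apply: Gl; apply/eqP => eq_i; apply: ne_i.
by apply/val_inj; rewrite /= -eq_i subrK.
Qed.

Definition wsum2 N (H : int -> int -> V) : V := wsum N (fun p => wsum N (H p)).

Lemma wsum2_widen M N H :
  (forall p q, (M < `|p|)%N || (M < `|q|)%N -> H p q = 0) -> (M <= N)%N ->
  wsum2 N H = wsum2 M H.
Proof.
move=> HM le_MN; rewrite /wsum2 (wsum_widen _ le_MN).
  by apply: eq_bigr => i _; apply: wsum_widen le_MN => q ltq; apply: HM; rewrite ltq orbT.
by move=> p ltp; rewrite /wsum big1 // => i _; apply: HM; rewrite ltp.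
Qed.

End WindowSum.

Ltac decide_int_eqs :=
  repeat match goal with |- context[(?a == ?b :> int)] =>
    first [ rewrite (_ : (a == b) = true); last by apply/eqP; lia
          | rewrite (_ : (a == b) = false); last by apply/eqP; lia ] end.

Section Loop.
Variables (K : fieldType) (V : lmodType K).
Local Notation L := (loop V).

Lemma loop_addE (x y : L) k : (x + y) k = x k + y k. Proof. by []. Qed.
Lemma loop_scaleE a (x : L) k : (a *: x) k = a *: x k. Proof. by []. Qed.
Lemma loop_oppE (x : L) k : (- x) k = - x k. Proof. by []. Qed.

Lemma loop_sumE I r (P : pred I) (F : I -> L) k :
  (\sum_(i <- r | P i) F i) k = \sum_(i <- r | P i) F i k.
Proof. by elim/big_rec2: _ => // i a b _ <-; rewrite loop_addE. Qed.

Lemma loop_ext (x y : L) : (forall k, x k = y k) -> x = y.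
Proof. by move=> eq_xy; apply: val_inj; apply: funext. Qed.

Lemma loop_bound_vanish (x : L) : vanish_beyond (loop_bound x) x.
Proof.
apply: (xgetPex 0%N (P := fun N : nat => vanish_beyond N x)).
by case: x => f /= /asboolP.
Qed.

Definition monom_fun (u : V) (e : int) (n : int) : V := if n == e then u else 0.

Lemma monom_fun_fsupp u e : monom_fun u e \in @fsuppb _ V.
Proof.
apply/asboolP; exists `|e|%N => n lt_en; rewrite /monom_fun.
by case: eqP => // eq_ne; move: lt_en; rewrite eq_ne ltnn.
Qed.

Definition monom u e : L := Loop (monom_fun_fsupp u e).

Lemma monomE u e k : monom u e k = if k == e then u else 0. Proof. by []. Qed.

Lemma monom0 e : monom 0 e = 0.
Proof. by apply: loop_ext => k; rewrite monomE if_same. Qed.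

Lemma monom_vanish u e N : (`|e| <= N)%N -> vanish_beyond N (monom u e).
Proof. by move=> le_eN n lt_Nn; rewrite monomE; case: eqP => // eq_ne; lia. Qed.

Lemma loop_monom_decomp (x : L) N : vanish_beyond N x ->
  x = \sum_(i < N.*2.+1) monom (x (i%:Z - N%:Z)) (i%:Z - N%:Z).
Proof.
move=> xN; apply: loop_ext => k; rewrite loop_sumE.
rewrite -[RHS]/(wsum N (fun p => monom (x p) p k)).
have [le_kN|lt_Nk] := leqP `|k| N.
  rewrite (@wsum_delta _ N _ k) // ?monomE ?eqxx // => p ne_pk.
  by rewrite monomE eq_sym (negbTE ne_pk).
rewrite xN // /wsum big1 // => i _; rewrite monomE.
by case: eqP => // eq_k; have := ltn_ord i; lia.
Qed.

Lemma monom_eq0_3 a b c (d : int) :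
  monom a d + monom b (d - 1) + monom c (d - 2) = 0 -> [/\ a = 0, b = 0 & c = 0].
Proof.
move=> eq0.
have coef k : (monom a d + monom b (d - 1) + monom c (d - 2)) k = 0 by rewrite eq0.
have := coef d; have := coef (d - 1); have := coef (d - 2).
rewrite !loop_addE !monomE !eqxx.
by decide_int_eqs; rewrite !add0r !addr0 => -> -> ->.
Qed.

End Loop.

Arguments loop_bound_vanish {K V} x.

Section LoopBracket.
Variables (K : fieldType) (V : lmodType K).
Local Notation L := (loop V).

Definition circ_term (circ : V -> V -> V) u (l : int) v (m : int) : V :=
  l%:~R *: circ u v - m%:~R *: circ v u.

Definition loop_br_term (br circ : V -> V -> V) (x y : int -> V) (p q k : int) : V :=
  (if p + q == k then br (x p) (y q) else 0) +
  (if p + q - 1 == k then circ_term circ (x p) p (y q) q else 0).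

Lemma loop_br_termE br circ (x y : L) k :
  loop_br br circ x y k =
  wsum2 (maxn (loop_bound x) (loop_bound y)) (fun p q => loop_br_term br circ x y p q k).
Proof. by []. Qed.

Lemma loop_br_swap br circ (x y : L) :
  loop_br br circ x y = - loop_br (fun u v => - br v u) circ y x.
Proof.
apply: loop_ext => k; rewrite loop_oppE !loop_br_termE maxnC /wsum2 /wsum.
rewrite [in RHS]exchange_big -sumrN; apply: eq_bigr => i _.
rewrite -sumrN; apply: eq_bigr => j _.
rewrite /loop_br_term /circ_term [_ + (i%:Z - _)]addrC.
by case: ifP => _; case: ifP => _; lmod_ring.
Qed.

Variables (br circ : V -> V -> V) (br_bilin : bilinear_op br) (circ_bilin : bilinear_op circ).

Lemma loop_br_term0l (x y : int -> V) p q k : x p = 0 -> loop_br_term br circ x y p q k = 0.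
Proof.
move=> xp0; rewrite /loop_br_term /circ_term xp0.
by bilin_simpl br_bilin; bilin_simpl circ_bilin; rewrite !scaler0 subrr !if_same addr0.
Qed.

Lemma loop_br_term0r (x y : int -> V) p q k : y q = 0 -> loop_br_term br circ x y p q k = 0.
Proof.
move=> yq0; rewrite /loop_br_term /circ_term yq0.
by bilin_simpl br_bilin; bilin_simpl circ_bilin; rewrite !scaler0 subrr !if_same addr0.
Qed.

Lemma loop_brE (x y : L) N k : vanish_beyond N x -> vanish_beyond N y ->
  loop_br br circ x y k = wsum2 N (fun p q => loop_br_term br circ x y p q k).
Proof.
set M := maxn (loop_bound x) (loop_bound y) => xN yN.
have xM : vanish_beyond M x := vanish_beyond_le (leq_maxl _ _) (loop_bound_vanish x).
have yM : vanish_beyond M y := vanish_beyond_le (leq_maxr _ _) (loop_bound_vanish y).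
have vanish M' : vanish_beyond M' x -> vanish_beyond M' y ->
    forall p q, (M' < `|p|)%N || (M' < `|q|)%N -> loop_br_term br circ x y p q k = 0.
  move=> xM' yM' p q /orP [ltp | ltq]; first exact/loop_br_term0l/xM'.
  exact/loop_br_term0r/yM'.
have xNM : vanish_beyond (minn N M) x by rewrite /minn; case: ifP.
have yNM : vanish_beyond (minn N M) y by rewrite /minn; case: ifP.
rewrite loop_br_termE (wsum2_widen (vanish _ xNM yNM) (geq_minr N M)).
exact: esym (wsum2_widen (vanish _ xNM yNM) (geq_minl N M)).
Qed.

Lemma loop_br_linr (x : L) : linear (loop_br br circ x).
Proof.
move=> a y z; apply: loop_ext => k.
set N := maxn (loop_bound x) (maxn (loop_bound y) (loop_bound z)).
have xN : vanish_beyond N x by apply: vanish_beyond_le (loop_bound_vanish x); lia.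
have yN : vanish_beyond N y by apply: vanish_beyond_le (loop_bound_vanish y); lia.
have zN : vanish_beyond N z by apply: vanish_beyond_le (loop_bound_vanish z); lia.
have ayzN : vanish_beyond N (a *: y + z).
  by move=> n ltn; rewrite loop_addE loop_scaleE yN // zN // scaler0 addr0.
rewrite loop_addE loop_scaleE !(@loop_brE _ _ N) //.
rewrite /wsum2 /wsum scaler_sumr -big_split; apply: eq_bigr => i _.
rewrite scaler_sumr -big_split; apply: eq_bigr => j _.
rewrite /loop_br_term /circ_term !loop_addE !loop_scaleE.
by case: ifP => _; case: ifP => _; bilin_simpl br_bilin; bilin_simpl circ_bilin; lmod_ring.
Qed.

Lemma monom_br u l v m : loop_br br circ (monom u l) (monom v m) =
  monom (br u v) (l + m) + monom (circ_term circ u l v m) (l + m - 1).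
Proof.
apply: loop_ext => k; set N := maxn `|l| `|m|.
rewrite (@loop_brE _ _ N) /wsum2; last 2 first.
- exact: monom_vanish (leq_maxl _ _).
- exact: monom_vanish (leq_maxr _ _).
rewrite (@wsum_delta _ N _ l) ?leq_maxl //; last first.
  move=> p ne_pl; rewrite /wsum big1 // => i _.
  by apply: loop_br_term0l; rewrite monomE (negbTE ne_pl).
rewrite (@wsum_delta _ N _ m) ?leq_maxr //; last first.
  by move=> q ne_qm; apply: loop_br_term0r; rewrite monomE (negbTE ne_qm).
by rewrite /loop_br_term loop_addE !monomE !eqxx (eq_sym (l + m)) (eq_sym (l + m - 1)).
Qed.

End LoopBracket.

Section LoopHomLie.
Variables (K : fieldType) (V : lmodType K) (br circ : V -> V -> V) (alpha : {linear V -> V}).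
Hypotheses (br_bilin : bilinear_op br) (circ_bilin : bilinear_op circ).
Local Notation L := (loop V).
Local Notation lbr := (loop_br br circ).
Local Notation phi := (loop_phi alpha).

Lemma loop_phi_linear : linear phi.
Proof. by move=> a x y; apply: loop_ext => k; rewrite /= linearP. Qed.

Lemma loop_phi_monom u e : phi (monom u e) = monom (alpha u) e.
Proof. by apply: loop_ext => k; rewrite monomE /= /monom_fun; case: eqP; rewrite ?linear0. Qed.

Lemma loop_br_bilinear : bilinear_op lbr.
Proof.
split=> [x | y]; first exact: loop_br_linr.
move=> a x z; rewrite !(loop_br_swap br circ _ y).
by rewrite (loop_br_linr (bilinear_op_opp br_bilin) circ_bilin) opprD scalerN.
Qed.

Lemma loop_br_skew : (forall u v, br u v = - br v u) -> forall x y, lbr x y = - lbr y x.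
Proof.
move=> br_skew x y; rewrite loop_br_swap.
by congr (- loop_br _ _ _ _); apply/funext => u; apply/funext => v; rewrite br_skew opprK.
Qed.

Local Notation J := (hom_jacobiator lbr phi).

Lemma loop_hom_jacobiator_eq0 :
  (forall u l v m w n, J (monom u l) (monom v m) (monom w n) = 0) -> forall x y z, J x y z = 0.
Proof.
have J_suml I r (P : pred I) (F : I -> L) y z :
    J (\sum_(i <- r | P i) F i) y z = \sum_(i <- r | P i) J (F i) y z.
  exact: (big_morph (fun x => J x y z)
    (fun x1 x2 => hom_jacobiatorDl loop_br_bilinear loop_phi_linear x1 x2 y z)
    (hom_jacobiator0l loop_br_bilinear loop_phi_linear y z)).
move=> J_monom x y z.
rewrite (loop_monom_decomp (loop_bound_vanish x)) J_suml big1 // => i _.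
rewrite hom_jacobiatorC (loop_monom_decomp (loop_bound_vanish y)) J_suml big1 // => j _.
rewrite hom_jacobiatorC (loop_monom_decomp (loop_bound_vanish z)) J_suml big1 // => k _.
Qed.

Local Notation circ_term := (circ_term circ).

Definition cyclic_sum (f : V -> int -> V -> int -> V -> int -> V) u l v m w n : V :=
  f u l v m w n + f v m w n u l + f w n u l v m.

Definition jac_term1 u l v m w n : V :=
  circ_term (br u v) (l + m) (alpha w) n + br (circ_term u l v m) (alpha w).

Definition jac_term2 u l v m w n : V :=
  circ_term (circ_term u l v m) (l + m - 1) (alpha w) n.

Lemma loop_hom_jacobiator_monom u l v m w n :
  J (monom u l) (monom v m) (monom w n) =
    monom (hom_jacobiator br alpha u v w) (l + m + n)
  + monom (cyclic_sum jac_term1 u l v m w n) (l + m + n - 1)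
  + monom (cyclic_sum jac_term2 u l v m w n) (l + m + n - 2).
Proof.
rewrite /hom_jacobiator !loop_phi_monom !monom_br //.
rewrite !(linear_funD (loop_br_bilinear.2 _)) !monom_br //.
apply: loop_ext => k; rewrite !loop_addE !monomE /cyclic_sum /jac_term1 /jac_term2.
have [->|ne0] := eqVneq k (l + m + n); first by decide_int_eqs; lmod_ring.
have [->|ne1] := eqVneq k (l + m + n - 1); first by decide_int_eqs; lmod_ring.
have [->|ne2] := eqVneq k (l + m + n - 2); first by decide_int_eqs; lmod_ring.
by decide_int_eqs; lmod_ring.
Qed.

Definition gd_compat x y z : V :=
  br (circ x y) (alpha z) - br (circ x z) (alpha y) + circ (br x y) (alpha z)
  - circ (br x z) (alpha y) - circ (alpha x) (br y z).

Definition hom_assoc x y z : V := circ (circ x y) (alpha z) - circ (alpha x) (circ y z).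

Definition hom_rcomm x y z : V := circ (circ x y) (alpha z) - circ (circ x z) (alpha y).

Definition compat_term u (l : int) v (m : int) w (n : int) : V := l%:~R *: gd_compat u v w.

Definition novikov_term u (l : int) v (m : int) w (n : int) : V :=
  (l * m)%:~R *: (hom_assoc u v w - hom_assoc v u w) + (l * (l - 1))%:~R *: hom_rcomm u v w.

Lemma cyclic_sum_jac_term1 : (forall x y, br x y = - br y x) ->
  forall u l v m w n, cyclic_sum jac_term1 u l v m w n = cyclic_sum compat_term u l v m w n.
Proof.
move=> br_skew u l v m w n.
rewrite /cyclic_sum /jac_term1 /compat_term /gd_compat /circ_term.
rewrite (br_skew u w) (br_skew v u) (br_skew w v).
by bilin_simpl br_bilin; bilin_simpl circ_bilin; lmod_ring.
Qed.

Lemma cyclic_sum_jac_term2 u l v m w n :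
  cyclic_sum jac_term2 u l v m w n = cyclic_sum novikov_term u l v m w n.
Proof.
rewrite /cyclic_sum /jac_term2 /novikov_term /hom_assoc /hom_rcomm /circ_term.
by bilin_simpl circ_bilin; lmod_ring.
Qed.

Lemma loop_HomLie_of_HomGD : HomGD br circ alpha -> HomLie lbr phi.
Proof.
case=> [[_ _ br_skew br_jac] [_ _ lsym rcomm] compat].
have jac0 x y z : hom_jacobiator br alpha x y z = 0 := br_jac x y z.
have gd0 x y z : gd_compat x y z = 0 := compat x y z.
have assoc_sym x y z : hom_assoc x y z - hom_assoc y x z = 0 by rewrite /hom_assoc lsym subrr.
have rcomm0 x y z : hom_rcomm x y z = 0 by rewrite /hom_rcomm rcomm subrr.
split; [exact: loop_br_bilinear | exact: loop_phi_linear | exact: loop_br_skew |].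
apply: loop_hom_jacobiator_eq0 => u l v m w n.
rewrite loop_hom_jacobiator_monom cyclic_sum_jac_term1 // cyclic_sum_jac_term2.
rewrite /cyclic_sum /compat_term /novikov_term jac0 !gd0 !assoc_sym !rcomm0.
by rewrite !scaler0 !addr0 !monom0 !addr0.
Qed.

Lemma HomGD_of_loop_HomLie : 2%:R != 0 :> K -> HomLie lbr phi -> HomGD br circ alpha.
Proof.
move=> two_neq0 [_ _ lbr_skew lbr_jac].
have br_skew u v : br u v = - br v u.
  have : lbr (monom u 0) (monom v 0) 0 = (- lbr (monom v 0) (monom u 0)) 0.
    by rewrite -lbr_skew.
  by rewrite !monom_br // loop_oppE !loop_addE !monomE; decide_int_eqs; rewrite !addr0.
have jac u l v m w n := monom_eq0_3 (etrans (esym (loop_hom_jacobiator_monom u l v m w n))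
  (lbr_jac (monom u l) (monom v m) (monom w n))).
have br_jac x y z : hom_jacobiator br alpha x y z = 0 by case: (jac x 0 y 0 z 0).
have compat x y z : gd_compat x y z = 0.
  have [_ + _] := jac x 1 y 0 z 0; rewrite cyclic_sum_jac_term1 // => <-.
  by rewrite /cyclic_sum /compat_term; lmod_ring.
have lsym x y z : hom_assoc x y z = hom_assoc y x z.
  have [_ _ +] := jac x 1 y 1 z 0; rewrite cyclic_sum_jac_term2 => S0.
  apply/eqP; rewrite -subr_eq0 -S0; apply/eqP.
  by rewrite /cyclic_sum /novikov_term; lmod_ring.
have rcomm x y z : hom_rcomm x y z = 0.
  have [_ _ +] := jac x 2 y 0 z 0; rewrite cyclic_sum_jac_term2 => S0.
  have /eqP : 2%:R *: hom_rcomm x y z = 0.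
    by rewrite -S0 /cyclic_sum /novikov_term; lmod_ring.
  by rewrite scaler_eq0 (negbTE two_neq0) => /eqP.
have alpha_lin : linear alpha by move=> a x y; rewrite linearP.
split; [split | split | exact: compat] => //.
by move=> x y z; apply/eqP; rewrite -subr_eq0; apply/eqP/rcomm.
Qed.

Lemma loop_HomLieP : 2%:R != 0 :> K -> HomLie lbr phi <-> HomGD br circ alpha.
Proof.
by move=> two_neq0; split; [exact: HomGD_of_loop_HomLie | exact: loop_HomLie_of_HomGD].
Qed.

End LoopHomLie.

Theorem theorem5p1 (R : realType) (A : lmodType R[i])
    (br circ : A -> A -> A) (alpha : {linear A -> A})
    (hbr : bilinear_op br) (hcirc : bilinear_op circ) :
  HomLie (@loop_br _ A br circ) (loop_phi alpha) <-> HomGD br circ alpha.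
Proof. by apply: loop_HomLieP; rewrite // pnatr_eq0. Qed.
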